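(* Let $P$ be a probability distribution of a random variable $\xi$, let $\mathcal X\subseteq\mathbb R^d$, and let $\lambda>0$. Assume: (i) for every $\xi$, the loss $x\mapsto \ell(x;\xi)$ is $G$-Lipschitz continuous and $L$-smooth on $\mathcal X$; (ii) $\psi:\mathbb R\to[0,+\infty]$ is convex, $\psi(1)=0$, $\psi(t)=+\infty$ for all $t<0$, and its conjugate $\psi^*(t)=\sup_{s\in\mathbb R}(st-\psi(s))$ is $M$-smooth. Define $$\mathcal L(x,\eta)=\mathbb E_{\xi\sim P}\Big[\lambda\psi^*\Big(\frac{\ell(x;\xi)-\eta}{\lambda}\Big)+\eta\Big],\qquad \Psi(x)=\min_{\eta\in\mathbb R}\mathcal L(x,\eta).$$ Then $\Psi$ is differentiable, and $\nabla\Psi(x)=\nabla_x\mathcal L(x,\eta)$ for any $\eta\in\arg\min_{\eta'\in\mathbb R}\mathcal L(x,\eta')$.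
   Context: $\Psi$ is the (dual form of the) penalized $\psi$-divergence distributionally robust optimization objective $\sup_Q\{\mathbb E_{\xi\sim Q}\ell(x;\xi)-\lambda d_\psi(Q,P)\}$, where $d_\psi(Q,P)=\int\psi(dQ/dP)\,dP$. A function is $L$-smooth if it is differentiable with $L$-Lipschitz gradient. *)

From HB Require Import structures.
From mathcomp Require Import all_boot all_order all_algebra.
From mathcomp Require Import all_classical all_reals all_analysis.
Set Implicit Arguments. Unset Strict Implicit. Unset Printing Implicit Defensive.
Import Order.TTheory GRing.Theory Num.Theory.
Import numFieldNormedType.Exports.
Local Open Scope classical_set_scope.
Local Open Scope ring_scope.

Definition enorm (R : realType) (d : nat) (v : 'rV[R]_d) : R :=
  Num.sqrt (\sum_(i < d) v ord0 i ^+ 2).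

Definition eucl_lipschitz_on (R : realType) (d : nat) (G : R)
    (X : set 'rV[R]_d) (f : 'rV[R]_d -> R) : Prop :=
  forall x y, X x -> X y -> `|f x - f y| <= G * enorm (x - y).

(* f is L-smooth on X: differentiable at every point of X, and its gradient
   is L-Lipschitz on X w.r.t. the Euclidean norm (the dual norm of the
   gradient difference is expressed through the differentials). *)
Definition eucl_smooth_on (R : realType) (d : nat) (L : R)
    (X : set 'rV[R]_d) (f : 'rV[R]_d -> R) : Prop :=
  (forall x, X x -> differentiable f x) /\
  (forall x y, X x -> X y -> forall h : 'rV[R]_d,
      `|'d f x h - 'd f y h| <= L * enorm (x - y) * enorm h).

Definition smooth1_real (R : realType) (M : R) (f : R -> R) : Prop :=
  (forall t, derivable f t 1) /\
  (forall s t, `|derive1 f s - derive1 f t| <= M * `|s - t|).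

Definition convex_ext (R : realType) (psi : R -> \bar R) : Prop :=
  forall (s t a : R), 0 <= a <= 1 ->
    (psi (a * s + (1 - a) * t)%R <= a%:E * psi s + (1 - a)%R%:E * psi t)%E.

Definition conj_ext (R : realType) (psi : R -> \bar R) (t : R) : \bar R :=
  ereal_sup [set ((s * t)%:E - psi s)%E | s in [set: R]].

(* real-valued version (meaningful when psi^* is finite everywhere) *)
Definition conj_real (R : realType) (psi : R -> \bar R) (t : R) : R :=
  fine (conj_ext psi t).

Definition dro_L (R : realType) (d : nat) (d0 : measure_display)
    (T : measurableType d0) (P : probability T R)
    (psi : R -> \bar R) (lam : R) (loss : 'rV[R]_d -> T -> R)
    (x : 'rV[R]_d) (eta : R) : R :=
  fine (\int[P]_xi
          (lam * conj_real psi ((loss x xi - eta) / lam) + eta)%:E)%E.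

Definition dro_Psi (R : realType) (d : nat) (d0 : measure_display)
    (T : measurableType d0) (P : probability T R)
    (psi : R -> \bar R) (lam : R) (loss : 'rV[R]_d -> T -> R)
    (x : 'rV[R]_d) : R :=
  inf [set dro_L P psi lam loss x eta | eta in [set: R]].

From HB Require Import structures.
From mathcomp Require Import all_boot all_order all_algebra.
From mathcomp Require Import all_classical all_reals all_analysis.
From mathcomp Require Import measurable_realfun ring lra.
Set Implicit Arguments.
Unset Strict Implicit.
Unset Printing Implicit Defensive.
Import Order.TTheory GRing.Theory Num.Theory.
Import numFieldNormedType.Exports.
Local Open Scope classical_set_scope.
Local Open Scope ring_scope.

(* Fix x and a minimizer eta of L(x, .), and let w = (psi^* )'((loss x - eta)/lam).
   The first-order condition in eta gives E[w] = 1.  Since psi^* is convex (a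
   supremum of affine maps), its tangent inequality yields, for all y and eta',
     L(y, eta') >= L(x, eta) + E[w (loss y - loss x)],
   while the M-smoothness of psi^* yields
     L(y, eta) <= L(x, eta) + E[w (loss y - loss x)] + M/lam G^2 |y - x|^2.
   So Psi and L(., eta) both coincide with L(x, eta) + E[w (loss y - loss x)] up to
   O(|y - x|^2), and the L-smoothness of the loss makes this expansion linear in
   y - x up to O(|y - x|^2): both are differentiable at x, with differential
   h |-> E[w d_x loss(h)]. *)

Lemma ler_of_small_slack {R : realFieldType} (x y C t0 : R) : 0 < t0 ->
  (forall t, 0 < t <= t0 -> x <= y + t * C) -> x <= y.
Proof.
move=> t0_gt0 slack; apply/ler_addgt0Pr => e e0.
have C1 : 0 < `|C| + 1 by rewrite ltr_wpDl.
set t := Num.min t0 (e / (`|C| + 1)).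
have t_gt0 : 0 < t by rewrite lt_min t0_gt0 divr_gt0.
have te : t * (`|C| + 1) <= e by rewrite -ler_pdivlMr // ge_min lexx orbT.
apply: (le_trans (slack t _)); first by rewrite t_gt0 ge_min lexx.
rewrite lerD2l; apply: le_trans (real_ler_norm (num_real _)) _.
rewrite normrM gtr0_norm //; apply: le_trans te.
by rewrite ler_pM2l // lerDl.
Qed.

Section LipschitzDerivative.
Context {R : realType} (f : R -> R) (K : R).
Hypothesis f_derivable : forall t, derivable f t 1.
Hypothesis f'_lipschitz : forall s t, `|derive1 f s - derive1 f t| <= K * `|s - t|.

Lemma derive1_lipschitz_ge0 : 0 <= K.
Proof.
by have := f'_lipschitz 1 0; rewrite subr0 normr1 mulr1; apply: le_trans.
Qed.

Lemma continuous_derive1 : continuous (derive1 f).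
Proof.
move=> t; apply/cvgrPdist_le => e e0.
have Ke : 0 < e / (K + 1) by rewrite divr_gt0 // ltr_wpDl ?derive1_lipschitz_ge0.
near=> s; apply: (le_trans (f'_lipschitz _ _)).
have : `|t - s| < e / (K + 1).
  by near: s; exact: (@cvgr_dist_lt _ _ _ _ _ id t cvg_id _ Ke).
rewrite ltr_pdivlMr ?ltr_wpDl ?derive1_lipschitz_ge0 // => ts.
have := derive1_lipschitz_ge0; have := normr_ge0 (t - s); nra.
Unshelve. all: by end_near.
Qed.

Let mean_value u v : u <= v ->
  exists2 c, u <= c <= v & f v - f u = derive1 f c * (v - u).
Proof.
move=> uv; have f_cont : {within `[u, v], continuous f}.
  by apply: derivable_within_continuous => z _; exact: f_derivable.
have f_is_derive (t : R) : is_derive t (1 : R) f (derive1 f t).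
  by rewrite derive1E; apply: derivableP.
have [c] := MVT_segment uv (fun t _ => f_is_derive t) f_cont.
by rewrite in_itv /=; exists c.
Qed.

Lemma taylor_lipschitz_derive1 a b :
  `|f b - f a - derive1 f a * (b - a)| <= K * (b - a) ^+ 2.
Proof.
have K0 := derive1_lipschitz_ge0.
have remainder c : `|c - a| <= `|b - a| -> f b - f a = derive1 f c * (b - a) ->
    `|f b - f a - derive1 f a * (b - a)| <= K * (b - a) ^+ 2.
  move=> ca ->; rewrite -mulrBl normrM -real_normK ?num_real // mulrA.
  rewrite ler_wpM2r //; apply: le_trans (f'_lipschitz _ _) _.
  exact: ler_wpM2l.
have [ab|ba] := leP a b.
  have [c /andP[ac cb] fab] := mean_value ab.
  by apply: (remainder c) fab; rewrite !ger0_norm ?subr_ge0 // lerB.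
have [c /andP[bc ca] fba] := mean_value (ltW ba).
apply: (remainder c); last by rewrite -opprB fba -mulrN opprB.
by rewrite distrC [`|b - a|]distrC !ger0_norm ?subr_ge0 // ?lerB // ltW.
Qed.

Lemma derive1_bound a :
  `|derive1 f a| <= `|f (a + 1)| + `|f (a - 1)| + 2 * `|f a| + K.
Proof.
have := taylor_lipschitz_derive1 a (a + 1).
have := taylor_lipschitz_derive1 a (a - 1).
have -> : a + 1 - a = 1 by ring.
have -> : a - 1 - a = -1 by ring.
rewrite sqrrN expr1n !mulr1 mulrN1 => /ler_normlP[? ?] /ler_normlP[? ?].
have /ler_normlP[? ?] := lexx `|f (a + 1)|.
have /ler_normlP[? ?] := lexx `|f (a - 1)|.
have /ler_normlP[? ?] := lexx `|f a|.
apply/ler_normlP; split; lra.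
Qed.

Hypothesis f_convex : forall a b t, 0 <= t <= 1 ->
  f (t * b + (1 - t) * a) <= t * f b + (1 - t) * f a.

Lemma convex_derive1_tangent a b : f a + derive1 f a * (b - a) <= f b.
Proof.
rewrite addrC -lerBrDr; apply: (ler_of_small_slack (C := K * (b - a) ^+ 2) ltr01).
move=> t /andP[t0 t1].
have := taylor_lipschitz_derive1 a (t * b + (1 - t) * a).
have -> : t * b + (1 - t) * a - a = t * (b - a) by ring.
move=> /ler_normlP[taylor _].
have := @f_convex a b t; rewrite (ltW t0) t1 => /(_ isT) chord.
rewrite -(ler_pM2l t0); nra.
Qed.

End LipschitzDerivative.

Section ConvexConjugate.
Context {R : realType} (psi : R -> \bar R).
Hypothesis conj_fin : forall t, conj_ext psi t \is a fin_num.

Lemma conj_realE t : conj_ext psi t = (conj_real psi t)%:E.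
Proof. by rewrite /conj_real fineK. Qed.

Lemma conj_real_convex a b t : 0 <= t <= 1 ->
  conj_real psi (t * b + (1 - t) * a) <=
    t * conj_real psi b + (1 - t) * conj_real psi a.
Proof.
move=> /andP[t0 t1]; rewrite -lee_fin -conj_realE.
apply: ge_ereal_sup => _ [s _ <-].
have affine_le u : ((s * u)%:E - psi s <= (conj_real psi u)%:E)%E.
  by rewrite -conj_realE; apply: ereal_sup_ubound; exists s.
case psi_s: (psi s) => [r| |] in affine_le *.
- have := affine_le a; have := affine_le b; rewrite -!EFinB !lee_fin => hb ha.
  have -> : s * (t * b + (1 - t) * a) - r =
            t * (s * b - r) + (1 - t) * (s * a - r) by ring.
  by apply: lerD; apply: ler_wpM2l; rewrite ?subr_ge0.
- by rewrite leNye.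
- by have := affine_le a; rewrite /= leye_eq.
Qed.

End ConvexConjugate.

Section QuadraticRemainder.
Context {R : realType} {V W : normedModType R}.

Lemma linear_fun_inj (f g : {linear V -> W}) : (f : V -> W) = g -> f = g.
Proof.
move: f g => [f [[af] [lf]]] [g [[ag] [lg]]] /= fg; subst g.
by rewrite (Prop_irrelevance af ag) (Prop_irrelevance lf lg).
Qed.

Lemma differentiable_quadratic_remainder (f : V -> W) (D : {linear V -> W})
    (x : V) (K r : R) :
  continuous D -> 0 < r ->
  (forall h, `|h| < r -> `|f (x + h) - f x - D h| <= K * `|h| ^+ 2) ->
  differentiable f x /\ 'd f x = D :> (V -> W).
Proof.
move=> D_cont r0 remainder.
have f_expansion : f \o shift x = cst (f x) + D +o_ 0 id.
  apply/eqaddoP => e e0.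
  have K1 : 0 < `|K| + 1 by rewrite ltr_wpDl.
  near=> h.
  have : `|h| < Num.min r (e / (`|K| + 1)).
    by near: h; apply: nbhs0_lt; rewrite lt_min r0 divr_gt0.
  rewrite lt_min ltr_pdivlMr // => /andP[hr he].
  have -> : (f \o shift x - (cst (f x) + D)) h = f (x + h) - f x - D h.
    by rewrite !fctE /= [h + x]addrC opprD addrA.
  apply: (le_trans (remainder h hr)); rewrite expr2 mulrA.
  apply: ler_wpM2r => //; apply: le_trans (ltW he); rewrite mulrC.
  apply: ler_wpM2l => //.
  by apply: le_trans (real_ler_norm (num_real K)) _; rewrite lerDl.
have dfE := diff_unique D_cont f_expansion.
by split => //; apply/diff_locallyP; rewrite dfE.
Unshelve. all: by end_near.
Qed.

Lemma linear_continuous_of_bound (f : {linear V -> W}) (C : R) :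
  (forall v, `|f v| <= C * `|v|) -> continuous f.
Proof.
move=> f_bound; apply/bounded_linear_continuous/bounded_funP => s.
exists (`|C| * s) => v vs; apply: le_trans (f_bound v) _.
apply: le_trans (ler_wpM2r (normr_ge0 v) (real_ler_norm (num_real C))) _.
exact: ler_wpM2l.
Qed.

End QuadraticRemainder.

Lemma cvg_harmonic_dominated {R : realType} (u : R^nat) (l C : R) :
  (forall n, `|u n - l| <= C * harmonic n) -> u @ \oo --> l.
Proof.
move=> u_near; apply/cvgrPdist_le => e e0.
have C1 : 0 < `|C| + 1 by rewrite ltr_wpDl.
have /cvgrPdist_le /(_ (e / (`|C| + 1))) := @cvg_harmonic R.
move=> /(_ (divr_gt0 e0 C1)); apply: filterS => n.
rewrite sub0r normrN ger0_norm ?harmonic_ge0 // ler_pdivlMr // => hn.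
rewrite distrC; apply: (le_trans (u_near n)); apply: le_trans hn.
rewrite mulrC ler_wpM2l ?harmonic_ge0 //.
by apply: le_trans (real_ler_norm (num_real C)) _; rewrite lerDl.
Qed.

Section EuclideanNorm.
Context {R : realType} {d : nat}.
Implicit Types v : 'rV[R]_d.

Lemma enorm_ge0 v : 0 <= enorm v.
Proof. exact: sqrtr_ge0. Qed.

Lemma enormZ (k : R) v : enorm (k *: v) = `|k| * enorm v.
Proof.
rewrite /enorm -sqrtr_sqr -sqrtrM ?sqr_ge0 // mulr_sumr.
by congr Num.sqrt; apply: eq_bigr => i _; rewrite mxE exprMn.
Qed.

Lemma coord_le_mx_norm v i : `|v ord0 i| <= `|v|.
Proof.
have /mapP[j _ ->] : `|v ord0 i| \in [seq `|v ij.1 ij.2| | ij : 'I_1 * 'I_d].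
  by apply/mapP; exists (ord0, i); rewrite ?mem_enum.
by rewrite [leRHS]/Num.norm /= mx_normrE; apply/bigmax_geP; right; exists j.
Qed.

Lemma enorm_le_mx_norm v : enorm v <= d%:R * `|v|.
Proof.
rewrite -(ger0_norm (mulr_ge0 (ler0n _ d) (normr_ge0 v))) -sqrtr_sqr.
rewrite ler_sqrt ?sqr_ge0 //.
apply: (le_trans (y := \sum_(i < d) `|v| ^+ 2)).
  apply: ler_sum => i _; rewrite -real_normK ?num_real //.
  by apply: lerXn2r; rewrite ?nnegrE // coord_le_mx_norm.
rewrite sumr_const card_ord exprMn -[_ *+ d]mulr_natl.
apply: ler_wpM2r; first exact: sqr_ge0.
by rewrite -natrX ler_nat; case: (d) => // n; rewrite leq_pmull.
Qed.

Lemma enorm_sqr_le_mx_norm v : enorm v ^+ 2 <= (d%:R * `|v|) ^+ 2.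
Proof.
by rewrite lerXn2r ?nnegrE ?enorm_ge0 ?mulr_ge0 ?enorm_le_mx_norm.
Qed.

End EuclideanNorm.

Lemma is_derive_along_line {R : realType} {V W : normedModType R} (f : V -> W)
    (x h : V) (t : R) :
  differentiable f (x + t *: h) ->
  is_derive t (1 : R) (fun s => f (x + s *: h)) ('d f (x + t *: h) h).
Proof.
move=> df.
have quotientE :
    (fun s : R => s^-1 *: (f (x + (s *: (1 : R) + t) *: h) - f (x + t *: h))) =
    (fun s : R => s^-1 *: (f (s *: h + (x + t *: h)) - f (x + t *: h))).
  apply: funext => s /=; congr (_ *: (f _ - _)).
  by rewrite -[s%:A]/(s * 1) mulr1 scalerDl addrCA.
apply: DeriveDef; first by rewrite /derivable quotientE; exact: diff_derivable.
by rewrite /derive quotientE; exact: deriveE.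
Qed.

Section SmoothNearPoint.
Context {R : realType} {d : nat}.
Variables (X : set 'rV[R]_d) (G L : R) (f : 'rV[R]_d -> R) (x : 'rV[R]_d) (r : R).
Hypothesis f_lipschitz : eucl_lipschitz_on G X f.
Hypothesis f_smooth : eucl_smooth_on L X f.
Hypothesis r_gt0 : 0 < r.
Hypothesis ball_in_X : forall h, `|h| < r -> X (x + h).

Lemma center_in_X : X x.
Proof. by rewrite -[x]addr0; apply: ball_in_X; rewrite normr0. Qed.

Lemma smooth_taylor h : `|h| < r ->
  `|f (x + h) - f x - 'd f x h| <= `|L| * enorm h ^+ 2.
Proof.
move=> hr.
have segment_in_X (t : R) : 0 <= t <= 1 -> X (x + t *: h).
  move=> /andP[t0 t1]; apply: ball_in_X; rewrite normrZ ger0_norm //.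
  by apply: le_lt_trans hr; rewrite ler_piMl.
have f_line (t : R) : 0 <= t <= 1 ->
    is_derive t (1 : R) (fun s => f (x + s *: h)) ('d f (x + t *: h) h).
  move=> t01; apply: is_derive_along_line.
  by apply: f_smooth.1; exact: segment_in_X.
have line_cont : {within `[0, 1], continuous (fun s => f (x + s *: h))}.
  apply: derivable_within_continuous => t; rewrite in_itv /= => t01.
  by have [] := f_line t t01.
have open_closed (t : R) : t \in `]0, 1[ -> 0 <= t <= 1.
  by rewrite in_itv /= => /andP[t0 t1]; rewrite !ltW.
have [c] := MVT_segment ler01 (fun t t01 => f_line t (open_closed t t01)) line_cont.
rewrite in_itv /= scale1r scale0r addr0 subr0 mulr1 => /andP[c0 c1] ->.
apply: le_trans (f_smooth.2 _ _ (segment_in_X c _) center_in_X h) _.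
  by rewrite c0 c1.
rewrite addrAC subrr add0r enormZ ger0_norm // expr2 !mulrA.
apply: ler_wpM2r; first exact: enorm_ge0.
apply: le_trans (real_ler_norm (num_real _)) _.
rewrite !normrM (ger0_norm c0) (ger0_norm (enorm_ge0 h)) -mulrA ler_wpM2l //.
by rewrite ler_piMl ?enorm_ge0.
Qed.

Definition ball_scale (h : 'rV[R]_d) := r / (`|h| + 1).

Lemma ball_scale_gt0 h : 0 < ball_scale h.
Proof. by rewrite divr_gt0 // ltr_wpDl. Qed.

Lemma scale_in_ball h t : 0 < t <= ball_scale h -> `|t *: h| < r.
Proof.
move=> /andP[t0 ts]; rewrite normrZ gtr0_norm //.
apply: le_lt_trans (ler_wpM2r (normr_ge0 h) ts) _.
rewrite /ball_scale mulrAC ltr_pdivrMr ?ltr_wpDl // ltr_pM2l //.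
by rewrite ltrDl.
Qed.

Lemma harmonic_step_bounds h n :
  0 < ball_scale h * harmonic n <= ball_scale h.
Proof.
rewrite mulr_gt0 ?ball_scale_gt0 ?harmonic_gt0 //=.
apply: ler_piMr; first exact: ltW (ball_scale_gt0 h).
by rewrite /= invf_le1 ?ler1n.
Qed.

Lemma lipschitz_differential_le h : `|'d f x h| <= `|G| * enorm h.
Proof.
apply: (ler_of_small_slack (C := `|L| * enorm h ^+ 2) (ball_scale_gt0 h)).
move=> t /andP[t0 ts]; have th := scale_in_ball (introT andP (conj t0 ts)).
have := smooth_taylor th; have := f_lipschitz (ball_in_X th) center_in_X.
rewrite addrAC subrr add0r enormZ (gtr0_norm t0) linearZ /= => lip taylor.
rewrite (_ : `|L| * (t * enorm h) ^+ 2 = t * (t * (`|L| * enorm h ^+ 2))) in taylor;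
  last by ring.
rewrite -(ler_pM2l t0) mulrDr.
set A := f (x + t *: h) - f x in lip taylor.
have -> : t * `|'d f x h| = `|A - (A - t * 'd f x h)|.
  by rewrite opprB addrC subrK normrM gtr0_norm.
apply: le_trans (ler_normB _ _) (lerD _ taylor); apply: le_trans lip _.
rewrite mulrCA; apply: ler_wpM2l; first exact: ltW.
by apply: ler_wpM2r; [exact: enorm_ge0 | exact: real_ler_norm (num_real G)].
Qed.

Lemma difference_quotient_cvg h :
  (fun n => (f (x + (ball_scale h * harmonic n) *: h) - f x) /
            (ball_scale h * harmonic n)) @ \oo --> 'd f x h.
Proof.
apply: (@cvg_harmonic_dominated _ _ _ (`|L| * ball_scale h * enorm h ^+ 2)).
move=> n; have tn := harmonic_step_bounds h n.
set t := ball_scale h * harmonic n in tn *; have /andP[t0 _] := tn.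
have := smooth_taylor (scale_in_ball tn).
have -> : (f (x + t *: h) - f x) / t - 'd f x h =
          (f (x + t *: h) - f x - 'd f x (t *: h)) / t.
  have -> : 'd f x (t *: h) = t * 'd f x h by rewrite linearZ.
  by field; rewrite gt_eqF.
rewrite normrM [`|t^-1|]gtr0_norm ?invr_gt0 // ler_pdivrMr // => taylor.
apply: le_trans taylor _; rewrite enormZ (gtr0_norm t0) le_eqVlt.
by apply/orP; left; apply/eqP; rewrite /t; ring.
Qed.

End SmoothNearPoint.

Section RealIntegrable.
Context {R : realType} {d0 : measure_display} {T : measurableType d0}
  (mu : {finite_measure set T -> \bar R}).
Local Notation integrable f := (mu.-integrable [set: T] (EFin \o f)).
Implicit Types f g : T -> R.

Lemma integrable_real_measurable f : integrable f -> measurable_fun [set: T] f.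
Proof. by move=> /integrableP[/measurable_EFinP]. Qed.

Lemma integrable_real_cst (k : R) : integrable (fun=> k).
Proof. exact: finite_measure_integrable_cst. Qed.

Lemma eq_integrable_real f g : f =1 g -> integrable f -> integrable g.
Proof.
by move=> fg; apply: (eq_integrable measurableT) => xi _ /=; rewrite fg.
Qed.

Lemma integrable_realD f g : integrable f -> integrable g ->
  integrable (fun xi => f xi + g xi).
Proof.
by move=> fi gi; apply: eq_integrable_real (integrableD measurableT fi gi).
Qed.

Lemma integrable_realB f g : integrable f -> integrable g ->
  integrable (fun xi => f xi - g xi).
Proof.
by move=> fi gi; apply: eq_integrable_real (integrableB measurableT fi gi).
Qed.

Lemma integrable_realZ (k : R) f : integrable f -> integrable (fun xi => k * f xi).
Proof.
by move=> fi; apply: eq_integrable_real (integrableZl measurableT k fi).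
Qed.

Lemma integrable_real_norm f : integrable f -> integrable (fun xi => `|f xi|).
Proof. by move=> fi; apply: eq_integrable_real (integrable_norm fi). Qed.

Lemma integrable_real_dominated f g : measurable_fun [set: T] f -> integrable g ->
  (forall xi, `|f xi| <= g xi) -> integrable f.
Proof.
move=> mf gi fg; apply: (le_integrable measurableT _ _ gi).
  exact/measurable_EFinP.
move=> xi _ /=; rewrite lee_fin (le_trans (fg xi)) //.
exact: real_ler_norm (num_real _).
Qed.

Lemma integrable_realM_bounded f g (K : R) : integrable f ->
  measurable_fun [set: T] g -> (forall xi, `|g xi| <= K) ->
  integrable (fun xi => f xi * g xi).
Proof.
move=> fi mg gK; apply: (integrable_real_dominated (g := fun xi => K * `|f xi|)).
- exact: measurable_funM (integrable_real_measurable fi) mg.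
- exact: integrable_realZ (integrable_real_norm fi).
- by move=> xi; rewrite normrM mulrC ler_wpM2r.
Qed.

Lemma le_normr_Rintegral_real f g : integrable f -> integrable g ->
  (forall xi, `|f xi| <= g xi) -> `|\int[mu]_xi f xi| <= \int[mu]_xi g xi.
Proof.
move=> fi gi fg; apply: le_trans (le_normr_Rintegral measurableT fi) _.
by apply: le_Rintegral => //; exact: integrable_real_norm.
Qed.

End RealIntegrable.

Lemma probability_Rintegral_cst {R : realType} {d0 : measure_display}
    {T : measurableType d0} (P : probability T R) (k : R) :
  \int[P]_xi k = k.
Proof.
have P1 : P [set: T] = 1%E := probability_setT P.
by rewrite Rintegral_cst // [X in fine X]P1 mulr1.
Qed.

Section DualObjective.
Context {R : realType} {d : nat} {d0 : measure_display} {T : measurableType d0}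
  (P : probability T R).
Variables (X : set 'rV[R]_d) (lam G M : R) (loss : 'rV[R]_d -> T -> R)
  (psi : R -> \bar R).
Hypothesis lam_gt0 : 0 < lam.
Hypothesis loss_lipschitz : forall xi, eucl_lipschitz_on G X (loss^~ xi).
Hypothesis conj_fin : forall t, conj_ext psi t \is a fin_num.
Hypothesis conj_smooth : smooth1_real M (conj_real psi).
Hypothesis loss_measurable : forall x, X x -> measurable_fun [set: T] (loss x).
Hypothesis L_integrable : forall x eta, X x ->
  P.-integrable [set: T]
    (fun xi => (lam * conj_real psi ((loss x xi - eta) / lam) + eta)%:E).

Local Notation integrable f := (P.-integrable [set: T] (EFin \o f)).
Local Notation c := (conj_real psi).
Local Notation F := (dro_L P psi lam loss).
Local Notation Psi := (dro_Psi P psi lam loss).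

Let M_ge0 : 0 <= M := derive1_lipschitz_ge0 conj_smooth.2.
Let conj_taylor := taylor_lipschitz_derive1 conj_smooth.1 conj_smooth.2.

Definition dual_arg y eta xi := (loss y xi - eta) / lam.

(* [(psi^* )'] at the dual argument is the density dQ/dP of the worst-case
   distribution Q. *)
Definition worst_density y eta xi := derive1 c (dual_arg y eta xi).

Definition weighted_increment x eta y :=
  \int[P]_xi (worst_density x eta xi * (loss y xi - loss x xi)).

Lemma dro_LE y eta : F y eta = \int[P]_xi (lam * c (dual_arg y eta xi) + eta).
Proof. by []. Qed.

Lemma dual_arg_shift y eta xi k :
  dual_arg y (eta - lam * k) xi = dual_arg y eta xi + k.
Proof. by rewrite /dual_arg; field; rewrite gt_eqF. Qed.

Lemma integrable_conj_dual y eta : X y ->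
  integrable (fun xi => c (dual_arg y eta xi)).
Proof.
move=> Xy.
have := integrable_realB (L_integrable eta Xy) (integrable_real_cst P eta).
move=> /(integrable_realZ lam^-1); apply: eq_integrable_real => xi.
by rewrite /dual_arg; field; rewrite gt_eqF.
Qed.

Lemma measurable_worst_density y eta : X y ->
  measurable_fun [set: T] (worst_density y eta).
Proof.
move=> Xy; apply: measurableT_comp.
  exact: continuous_measurable_fun (continuous_derive1 conj_smooth.2).
apply: measurable_funM; last exact: measurable_cst.
exact: measurable_funB (loss_measurable Xy) (measurable_cst _).
Qed.

Lemma integrable_worst_density y eta : X y -> integrable (worst_density y eta).
Proof.
move=> Xy; set a := dual_arg y eta.
have w_bound xi : `|worst_density y eta xi| <=
    `|c (a xi + 1)| + `|c (a xi - 1)| + 2 * `|c (a xi)| + M.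
  exact: derive1_bound conj_smooth.1 conj_smooth.2 _.
apply: (integrable_real_dominated (measurable_worst_density eta Xy) _ w_bound).
have shifted k : integrable (fun xi => `|c (a xi + k)|).
  have := integrable_real_norm (integrable_conj_dual (eta - lam * k) Xy).
  by apply: eq_integrable_real => xi /=; rewrite dual_arg_shift.
apply: integrable_realD; last exact: integrable_real_cst.
apply: integrable_realD (integrable_realD (shifted 1) (shifted (-1))) _.
exact: integrable_realZ (integrable_real_norm (integrable_conj_dual eta Xy)).
Qed.

Lemma dro_L_sub_shift_le x eta dl : X x ->
  F x (eta + dl) - F x eta <=
    dl * (1 - \int[P]_xi worst_density x eta xi) + M / lam * dl ^+ 2.
Proof.
move=> Xx; have wi := integrable_worst_density eta Xx.
have Li e := L_integrable e Xx.
have wdi := integrable_realB (integrable_real_cst P dl) (integrable_realZ dl wi).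
have -> : dl * (1 - \int[P]_xi worst_density x eta xi) + M / lam * dl ^+ 2 =
    \int[P]_xi (dl - dl * worst_density x eta xi + M / lam * dl ^+ 2).
  rewrite (RintegralD measurableT wdi) ?(integrable_real_cst P) //.
  rewrite (RintegralB measurableT (integrable_real_cst P dl)) ?integrable_realZ //.
  by rewrite (RintegralZl _ measurableT wi) !probability_Rintegral_cst mulrBr mulr1.
rewrite !dro_LE -(RintegralB measurableT (Li _) (Li _)).
apply: le_Rintegral => //.
- exact: integrable_realB (Li _) (Li _).
- exact: integrable_realD wdi (integrable_real_cst P _).
move=> xi _; rewrite /worst_density -/(dual_arg x eta xi).
have -> : (loss x xi - (eta + dl)) / lam = dual_arg x eta xi - dl / lam.
  by rewrite /dual_arg; field; rewrite gt_eqF.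
set a := dual_arg x eta xi.
have := conj_taylor a (a - dl / lam).
have -> : a - dl / lam - a = - (dl / lam) by ring.
move=> /ler_normlP[_ taylor].
suff : lam * c (a - dl / lam) - lam * c a + dl * derive1 c a <= M / lam * dl ^+ 2.
  by lra.
have -> : lam * c (a - dl / lam) - lam * c a + dl * derive1 c a =
    lam * (c (a - dl / lam) - c a - derive1 c a * - (dl / lam)).
  by field; rewrite gt_eqF.
have -> : M / lam * dl ^+ 2 = lam * (M * (- (dl / lam)) ^+ 2).
  by field; rewrite gt_eqF.
by rewrite ler_pM2l.
Qed.

Lemma worst_density_mean x eta : X x -> (forall eta', F x eta <= F x eta') ->
  \int[P]_xi worst_density x eta xi = 1.
Proof.
move=> Xx eta_min; set W := \int[P]_xi worst_density x eta xi.
have quadratic dl : 0 <= dl * (1 - W) + M / lam * dl ^+ 2.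
  by apply: le_trans (dro_L_sub_shift_le eta dl Xx); rewrite subr_ge0.
have W_le1 : W - 1 <= 0.
  apply: (ler_of_small_slack (C := M / lam) ltr01) => t /andP[t0 _].
  rewrite add0r -(ler_pM2l t0) -subr_ge0.
  by rewrite (_ : _ - _ = t * (1 - W) + M / lam * t ^+ 2) ?quadratic //; ring.
have W_ge1 : 1 - W <= 0.
  apply: (ler_of_small_slack (C := M / lam) ltr01) => t /andP[t0 _].
  rewrite add0r -(ler_pM2l t0) -subr_ge0.
  by rewrite (_ : _ - _ = - t * (1 - W) + M / lam * (- t) ^+ 2) ?quadratic //; ring.
lra.
Qed.

Lemma integrable_weighted_increment x eta y : X x -> X y ->
  integrable (fun xi => worst_density x eta xi * (loss y xi - loss x xi)).
Proof.
move=> Xx Xy; apply: (integrable_realM_bounded (K := G * enorm (y - x))).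
- exact: integrable_worst_density.
- exact: measurable_funB (loss_measurable Xy) (loss_measurable Xx).
- by move=> xi; exact: loss_lipschitz.
Qed.

Let conj_tangent :=
  convex_derive1_tangent conj_smooth.1 conj_smooth.2
    (@conj_real_convex _ psi conj_fin).

Lemma dro_L_ge_increment x eta y eta' : X x -> X y ->
  (forall e, F x eta <= F x e) ->
  F x eta + weighted_increment x eta y <= F y eta'.
Proof.
move=> Xx Xy eta_min.
have wi := integrable_worst_density eta Xx.
have Ii := integrable_weighted_increment eta Xx Xy.
have Li := L_integrable eta Xx.
have shift_i :
    integrable (fun xi => (eta - eta') * worst_density x eta xi - (eta - eta')).
  exact: integrable_realB (integrable_realZ _ wi) (integrable_real_cst P _).
(* the shift term integrates to zero by the first-order condition in eta *)
have -> : F x eta + weighted_increment x eta y =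
    \int[P]_xi ((lam * c (dual_arg x eta xi) + eta) +
       worst_density x eta xi * (loss y xi - loss x xi) +
       ((eta - eta') * worst_density x eta xi - (eta - eta'))).
  rewrite (RintegralD measurableT (integrable_realD Li Ii) shift_i).
  rewrite (RintegralD measurableT Li Ii).
  rewrite (RintegralB measurableT (integrable_realZ _ wi))
    ?(integrable_real_cst P) // (RintegralZl _ measurableT wi).
  rewrite worst_density_mean // probability_Rintegral_cst.
  by rewrite mulr1 subrr addr0.
rewrite dro_LE; apply: le_Rintegral => //.
- exact: integrable_realD (integrable_realD Li Ii) shift_i.
- exact: L_integrable.
move=> xi _; rewrite /worst_density -/(dual_arg y eta' xi).
set a := dual_arg x eta xi; set b := dual_arg y eta' xi.
have : lam * (c a + derive1 c a * (b - a)) <= lam * c b.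
  by rewrite ler_pM2l // conj_tangent.
have -> : lam * (c a + derive1 c a * (b - a)) = lam * c a +
    derive1 c a * (loss y xi - loss x xi) + (eta - eta') * derive1 c a.
  by rewrite /b /a /dual_arg; field; rewrite gt_eqF.
lra.
Qed.

Lemma dro_L_sub_increment x eta y : X x -> X y ->
  `|F y eta - F x eta - weighted_increment x eta y| <=
    M / lam * (G * enorm (y - x)) ^+ 2.
Proof.
move=> Xx Xy.
have Ii := integrable_weighted_increment eta Xx Xy.
have Di := integrable_realB (L_integrable eta Xy) (L_integrable eta Xx).
rewrite !dro_LE.
rewrite -(RintegralB measurableT (L_integrable eta Xy) (L_integrable eta Xx)).
rewrite -(RintegralB measurableT Di Ii) -[leRHS](probability_Rintegral_cst P).
apply: le_normr_Rintegral_real.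
- exact: integrable_realB Di Ii.
- exact: integrable_real_cst.
move=> xi; rewrite /worst_density -/(dual_arg y eta xi) -/(dual_arg x eta xi).
set a := dual_arg x eta xi; set b := dual_arg y eta xi.
have -> : lam * c b + eta - (lam * c a + eta) -
    derive1 c a * (loss y xi - loss x xi) =
    lam * (c b - c a - derive1 c a * (b - a)).
  by rewrite /b /a /dual_arg; field; rewrite gt_eqF.
rewrite normrM gtr0_norm //.
apply: le_trans (ler_wpM2l (ltW lam_gt0) (conj_taylor a b)) _.
have -> : lam * (M * (b - a) ^+ 2) = M / lam * (loss y xi - loss x xi) ^+ 2.
  by rewrite /b /a /dual_arg; field; rewrite gt_eqF.
have lip := loss_lipschitz xi Xy Xx.
apply: ler_wpM2l; first by rewrite divr_ge0 // ltW.
rewrite -real_normK ?num_real // lerXn2r ?nnegrE //.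
exact: le_trans (normr_ge0 _) lip.
Qed.

Lemma dro_Psi_le y eta :
  (exists e, forall e', F y e <= F y e') -> Psi y <= F y eta.
Proof.
move=> [e e_min]; apply: ge_inf; last by exists eta.
by exists (F y e) => _ [e' _ <-].
Qed.

Lemma dro_Psi_ge y v : (forall e, v <= F y e) -> v <= Psi y.
Proof.
move=> v_lb; apply: lb_le_inf; first by exists (F y 0), 0.
by move=> _ [e _ <-].
Qed.

Lemma dro_Psi_sub_increment x eta y : X x -> X y ->
  (forall e, F x eta <= F x e) -> (exists e, forall e', F y e <= F y e') ->
  `|Psi y - Psi x - weighted_increment x eta y| <=
    M / lam * (G * enorm (y - x)) ^+ 2.
Proof.
move=> Xx Xy eta_min y_min.
have -> : Psi x = F x eta.
  by apply/le_anti; rewrite dro_Psi_le ?dro_Psi_ge //; exists eta.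
have lower := dro_Psi_ge (fun e => dro_L_ge_increment e Xx Xy eta_min).
have upper := dro_Psi_le eta y_min.
have /ler_normlP[_ F_upper] := dro_L_sub_increment eta Xx Xy.
have bound_ge0 : 0 <= M / lam * (G * enorm (y - x)) ^+ 2.
  by rewrite mulr_ge0 ?sqr_ge0 // divr_ge0 // ltW.
apply/ler_normlP; split; lra.
Qed.

Section InteriorPoint.
Variables (L : R) (x : 'rV[R]_d) (r : R).
Hypothesis loss_smooth : forall xi, eucl_smooth_on L X (loss^~ xi).
Hypothesis r_gt0 : 0 < r.
Hypothesis ball_in_X : forall h, `|h| < r -> X (x + h).

Let Xx : X x := center_in_X r_gt0 ball_in_X.

Lemma measurable_loss_differential h :
  measurable_fun [set: T] (fun xi => 'd (loss^~ xi) x h).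
Proof.
apply: (measurable_fun_cvg (h := fun n xi =>
  (loss (x + (ball_scale r h * harmonic n) *: h) xi - loss x xi) /
  (ball_scale r h * harmonic n))); last first.
  by move=> xi _; exact: difference_quotient_cvg (loss_smooth xi) r_gt0 ball_in_X h.
move=> n; apply: measurable_funM; last exact: measurable_cst.
apply: measurable_funB (loss_measurable _) (loss_measurable Xx).
exact/ball_in_X/scale_in_ball/harmonic_step_bounds.
Qed.

Lemma integrable_density_differential eta h :
  integrable (fun xi => worst_density x eta xi * 'd (loss^~ xi) x h).
Proof.
apply: (integrable_realM_bounded (K := `|G| * enorm h)).
- exact: integrable_worst_density.
- exact: measurable_loss_differential.
- move=> xi; exact: lipschitz_differential_le (loss_lipschitz xi) (loss_smooth xi)
    r_gt0 ball_in_X h.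
Qed.

Definition mean_differential eta h :=
  \int[P]_xi (worst_density x eta xi * 'd (loss^~ xi) x h).

Lemma mean_differential_is_linear eta : linear (mean_differential eta).
Proof.
move=> a u v; rewrite /mean_differential.
under eq_Rintegral do rewrite linearP /= mulrDr mulrCA.
have ui := integrable_density_differential eta u.
rewrite (RintegralD measurableT (integrable_realZ a ui))
  ?integrable_density_differential //.
by rewrite (RintegralZl _ measurableT ui).
Qed.

Definition mean_differential_lin eta : {linear 'rV[R]_d -> R} :=
  HB.pack (mean_differential eta)
    (GRing.isLinear.Build _ _ _ _ _ (mean_differential_is_linear eta)).

Lemma weighted_increment_taylor eta h : `|h| < r ->
  `|weighted_increment x eta (x + h) - mean_differential eta h| <=
    `|L| * enorm h ^+ 2 * \int[P]_xi `|worst_density x eta xi|.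
Proof.
move=> hr; have wi := integrable_real_norm (integrable_worst_density eta Xx).
have Ii := integrable_weighted_increment eta Xx (ball_in_X hr).
have Di := integrable_density_differential eta h.
rewrite -(RintegralB measurableT Ii Di) -(RintegralZl _ measurableT wi).
apply: le_normr_Rintegral_real.
- exact: integrable_realB.
- exact: integrable_realZ.
move=> xi; rewrite -mulrBr normrM mulrC ler_wpM2r //.
exact: smooth_taylor (loss_smooth xi) r_gt0 ball_in_X h hr.
Qed.

Lemma continuous_mean_differential eta : continuous (mean_differential_lin eta).
Proof.
have wi := integrable_real_norm (integrable_worst_density eta Xx).
set W1 := \int[P]_xi `|worst_density x eta xi|.
have W1_ge0 : 0 <= W1 by apply: Rintegral_ge0.
apply: (linear_continuous_of_bound (C := `|G| * d%:R * W1)) => h /=.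
apply: le_trans (_ : `|mean_differential eta h| <= `|G| * enorm h * W1) _.
  rewrite -(RintegralZl _ measurableT wi).
  apply: le_normr_Rintegral_real.
  - exact: integrable_density_differential.
  - exact: integrable_realZ.
  move=> xi; rewrite normrM mulrC ler_wpM2r //.
  exact: lipschitz_differential_le (loss_lipschitz xi) (loss_smooth xi)
    r_gt0 ball_in_X h.
have -> : `|G| * d%:R * W1 * `|h| = `|G| * (d%:R * `|h|) * W1 by ring.
by apply: ler_wpM2r => //; apply: ler_wpM2l => //; exact: enorm_le_mx_norm.
Qed.

Lemma differentiable_of_increment eta (g : 'rV[R]_d -> R) :
  (forall y, X y -> `|g y - g x - weighted_increment x eta y| <=
     M / lam * (G * enorm (y - x)) ^+ 2) ->
  differentiable g x /\ 'd g x = mean_differential_lin eta :> ('rV[R]_d -> R).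
Proof.
move=> g_increment.
set W1 := \int[P]_xi `|worst_density x eta xi|.
have W1_ge0 : 0 <= W1 by apply: Rintegral_ge0.
set K := M / lam * G ^+ 2 + `|L| * W1.
have K_ge0 : 0 <= K.
  apply: addr_ge0; last exact: mulr_ge0.
  by rewrite mulr_ge0 ?sqr_ge0 // divr_ge0 // ltW.
apply: (differentiable_quadratic_remainder (K := K * d%:R ^+ 2)
  (@continuous_mean_differential eta) r_gt0) => h hr.
rewrite -[mean_differential_lin eta h]/(mean_differential eta h).
have := g_increment _ (ball_in_X hr).
rewrite (_ : x + h - x = h); last by rewrite addrC addKr.
rewrite exprMn mulrA => g_h.
have := weighted_increment_taylor eta hr.
set I := weighted_increment x eta (x + h) => D_h.
apply: le_trans (ler_distD I _ _) _; apply: le_trans (lerD g_h D_h) _.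
have -> : M / lam * G ^+ 2 * enorm h ^+ 2 + `|L| * enorm h ^+ 2 * W1 =
    K * enorm h ^+ 2 by rewrite /K; ring.
rewrite -mulrA -exprMn; apply: ler_wpM2l => //.
exact: enorm_sqr_le_mx_norm.
Qed.

Lemma dro_differentiable_at_minimizer eta :
  (forall e, F x eta <= F x e) ->
  (forall y, X y -> exists e, forall e', F y e <= F y e') ->
  [/\ differentiable Psi x, differentiable (F^~ eta) x &
      'd Psi x = 'd (F^~ eta) x].
Proof.
move=> eta_min minimizers.
have [dPsi dPsiE] := @differentiable_of_increment eta Psi
  (fun y Xy => dro_Psi_sub_increment Xx Xy eta_min (minimizers y Xy)).
have [dF dFE] := @differentiable_of_increment eta (F^~ eta)
  (fun y Xy => dro_L_sub_increment eta Xx Xy).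
by split => //; apply: linear_fun_inj; rewrite dPsiE dFE.
Qed.

End InteriorPoint.

End DualObjective.

Unset Implicit Arguments.

Theorem lemma2p6 (R : realType) (d : nat) (d0 : measure_display)
    (T : measurableType d0) (P : probability T R)
    (X : set 'rV[R]_d) (lam G L M : R)
    (loss : 'rV[R]_d -> T -> R) (psi : R -> \bar R) :
  open X ->
  0 < lam ->
  (* (i) loss is G-Lipschitz and L-smooth on X for every xi *)
  (forall xi, eucl_lipschitz_on G X (fun x => loss x xi)) ->
  (forall xi, eucl_smooth_on L X (fun x => loss x xi)) ->
  (* (ii) psi : R -> [0,+oo] convex, psi 1 = 0, psi = +oo on (-oo,0) *)
  (forall t, (0 <= psi t)%E) ->
  convex_ext psi ->
  psi 1 = 0%E ->
  (forall t, t < 0 -> psi t = +oo%E) ->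
  (* psi^* is (finite and) M-smooth *)
  (forall t, conj_ext psi t \is a fin_num) ->
  smooth1_real M (conj_real psi) ->
  (* standing well-posedness: the expectation defining L is finite *)
  (forall x, X x -> measurable_fun [set: T] (loss x)) ->
  (forall x eta, X x ->
     P.-integrable [set: T]
       (fun xi => (lam * conj_real psi ((loss x xi - eta) / lam) + eta)%:E)) ->
  (* Psi(x) = min_eta L(x, eta): the minimum is attained *)
  (forall x, X x -> exists eta, forall eta',
       dro_L P psi lam loss x eta <= dro_L P psi lam loss x eta') ->
  forall x, X x ->
    differentiable (dro_Psi P psi lam loss) x /\
    forall eta, (forall eta', dro_L P psi lam loss x eta <= dro_L P psi lam loss x eta') ->
      differentiable (fun y => dro_L P psi lam loss y eta) x /\
      'd (dro_Psi P psi lam loss) x = 'd (fun y => dro_L P psi lam loss y eta) x.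
Proof.
move=> X_open lam_gt0 loss_lip loss_smooth _ _ _ _ conj_fin conj_smooth
  loss_meas L_int minimizers x Xx.
have [r r_gt0 ball_in_X] : exists2 r, 0 < r & forall h, `|h| < r -> X (x + h).
  have /nbhs_ballP[r r_gt0 ball_r] := X_open x Xx.
  exists r => // h hr; apply: ball_r.
  by rewrite -ball_normE /= opprD addrA subrr sub0r normrN.
have at_minimizer eta eta_min := dro_differentiable_at_minimizer lam_gt0 loss_lip
  conj_fin conj_smooth loss_meas L_int loss_smooth r_gt0 ball_in_X (eta := eta)
  eta_min minimizers.
have [eta0 /at_minimizer[dPsi _ _]] := minimizers x Xx.
by split => // eta /at_minimizer[].
Qed.
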